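(* (a) For every positive function $\varphi(t)$ and every function $Q(r)$, the metric $$ds^2=-\varphi^3(t)dt^2+\varphi(t)\big([t\,Q(r)+1]^2dr^2+dx^2+dy^2\big)$$ is a plane-symmetric perfect fluid solution with $u=\varphi^{-3/2}\partial_t$, pressure $p=\varphi^{-3}\left[\frac74\frac{\dot\varphi^2}{\varphi^2}-\frac{\ddot\varphi}{\varphi}\right]$ and energy density $\rho=\varphi^{-3}\left[\frac34\frac{\dot\varphi^2}{\varphi^2}+\frac{\dot\varphi Q}{\varphi(tQ+1)}\right]$. (b) Conversely, every solution $(\varphi(t),\alpha(t,r),v(t))$, $v,\varphi>0$, of $2v\varphi\ddot\alpha+(\dot v\varphi+3v\dot\varphi)\dot\alpha=0$ with $\alpha=\alpha_1(t)+\alpha_2(t)Q(r)$, $\alpha_2$ non-constant, defines (via $ds^2=-v^{-1}dt^2+\varphi[\alpha^2dr^2+dx^2+dy^2]$) a metric which, after a change of the time coordinate, constant rescalings of $\varphi$ and of the spatial coordinates, and a redefinition of $r$ and $Q$, takes the form in (a).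
   Context: Dot denotes $d/dt$. The equation in (b) is the perfect fluid field equation for the $k=0$ T-models written in the variables $(\varphi,\alpha,v)$. *)

From Stdlib Require Import Reals Lra.
From Coquelicot Require Import Coquelicot.
Open Scope R_scope.

(** Points of spacetime in coordinates (x^0,x^1,x^2,x^3) = (t,r,x,y);
    only the indices 0..3 are used. *)
Definition pt := nat -> R.

Definition mkpt (t r x y : R) : pt :=
  fun i => match i with 0%nat => t | 1%nat => r | 2%nat => x | _ => y end.

Definition Metric := nat -> nat -> pt -> R.

Definition upd (x : pt) (i : nat) (s : R) : pt :=
  fun j => if Nat.eqb j i then s else x j.

Definition pd (f : pt -> R) (i : nat) (x : pt) : R :=
  Derive (fun s => f (upd x i s)) (x i).

Definition sum4 (f : nat -> R) : R := f 0%nat + f 1%nat + f 2%nat + f 3%nat.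

Definition christoffel (g gi : Metric) (a b c : nat) (x : pt) : R :=
  / 2 * sum4 (fun d => gi a d x * (pd (g d c) b x + pd (g d b) c x - pd (g b c) d x)).

(** Ricci tensor R_{bd} = R^a_{bad},
    R^a_{bcd} = d_c Gamma^a_{db} - d_d Gamma^a_{cb} + Gamma^a_{ce} Gamma^e_{db} - Gamma^a_{de} Gamma^e_{cb}. *)
Definition ricci (g gi : Metric) (b d : nat) (x : pt) : R :=
  sum4 (fun a =>
    pd (christoffel g gi a d b) a x - pd (christoffel g gi a a b) d x
    + sum4 (fun e => christoffel g gi a a e x * christoffel g gi e d b x
                     - christoffel g gi a d e x * christoffel g gi e a b x)).

Definition scalar_curv (g gi : Metric) (x : pt) : R :=
  sum4 (fun b => sum4 (fun d => gi b d x * ricci g gi b d x)).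

Definition einstein (g gi : Metric) (a b : nat) (x : pt) : R :=
  ricci g gi a b x - / 2 * scalar_curv g gi x * g a b x.

Definition is_inverse_metric_at (g gi : Metric) (x : pt) : Prop :=
  forall a c, (a < 4)%nat -> (c < 4)%nat ->
    sum4 (fun b => g a b x * gi b c x) = if Nat.eqb a c then 1 else 0.

Definition near (x : pt) (P : pt -> Prop) : Prop :=
  exists eps, 0 < eps /\
    forall y, (forall i, (i < 4)%nat -> Rabs (y i - x i) < eps) -> P y.

Definition ulow (g : Metric) (u : nat -> pt -> R) (a : nat) (x : pt) : R :=
  sum4 (fun b => g a b x * u b x).

(** Perfect fluid solution at the point x (units 8 pi G = 1):
    G_{ab} = (rho + p) u_a u_b + p g_{ab}, with g(u,u) = -1. *)
Definition perfect_fluid_at (g : Metric) (u : nat -> pt -> R) (rho p : pt -> R)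
    (x : pt) : Prop :=
  exists gi : Metric,
    near x (is_inverse_metric_at g gi) /\
    sum4 (fun a => u a x * ulow g u a x) = -1 /\
    forall a b, (a < 4)%nat -> (b < 4)%nat ->
      einstein g gi a b x = (rho x + p x) * ulow g u a x * ulow g u b x + p x * g a b x.

Definition metricA (phi Q : R -> R) : Metric :=
  fun a b x =>
    match a, b with
    | 0%nat, 0%nat => - (phi (x 0%nat)) ^ 3
    | 1%nat, 1%nat => phi (x 0%nat) * (x 0%nat * Q (x 1%nat) + 1) ^ 2
    | 2%nat, 2%nat => phi (x 0%nat)
    | 3%nat, 3%nat => phi (x 0%nat)
    | _, _ => 0
    end.

Definition uA (phi : R -> R) : nat -> pt -> R :=
  fun a x => match a with 0%nat => / sqrt ((phi (x 0%nat)) ^ 3) | _ => 0 end.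

Definition pA (phi : R -> R) : pt -> R :=
  fun x => let t := x 0%nat in
    / (phi t) ^ 3 * (7 / 4 * (Derive phi t) ^ 2 / (phi t) ^ 2
                     - Derive (Derive phi) t / phi t).

Definition rhoA (phi Q : R -> R) : pt -> R :=
  fun x => let t := x 0%nat in let r := x 1%nat in
    / (phi t) ^ 3 * (3 / 4 * (Derive phi t) ^ 2 / (phi t) ^ 2
                     + Derive phi t * Q r / (phi t * (t * Q r + 1))).

Definition metricB (v phi : R -> R) (alpha : R -> R -> R) : Metric :=
  fun a b x =>
    match a, b with
    | 0%nat, 0%nat => - / v (x 0%nat)
    | 1%nat, 1%nat => phi (x 0%nat) * (alpha (x 0%nat) (x 1%nat)) ^ 2
    | 2%nat, 2%nat => phi (x 0%nat)
    | 3%nat, 3%nat => phi (x 0%nat)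
    | _, _ => 0
    end.

(** Pullback of a metric g along a coordinate change F (new coords = F(old)):
    (F^* g)_{ab}(y) = sum_{c,d} dF^c/dy^a dF^d/dy^b g_{cd}(F y). *)
Definition pullback (g : Metric) (F : pt -> pt) : Metric :=
  fun a b y =>
    sum4 (fun c => sum4 (fun d =>
      pd (fun z => F z c) a y * pd (fun z => F z d) b y * g c d (F y))).

Definition in_I (lo hi : Rbar) (t : R) : Prop := Rbar_lt lo t /\ Rbar_lt t hi.

(* Part (a) is a direct computation: the metric is diagonal, its Christoffel symbols are explicit
   rational expressions in [phi], [phi'], [Q], [Q'], and the Einstein tensor is diagonal with
   [G_00 = rho phi^3] and [G_ii = p g_ii].

   Part (b): [sqrt v phi^(3/2)] is an integrating factor of the field equation, which thus reads
   [(sqrt v phi^(3/2) alpha_t)_t = 0].  With the new time [T = int v^(-1/2) phi^(-3/2) dt] this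
   gives [alpha(t,r) = alpha(t0,r) + C(r) T(t)], and [-dt^2/v = -phi^3 dT^2].  The new radial
   coordinate [R = int alpha(t0,r) dr] turns [phi alpha^2 dr^2] into [phi (T Q~(R) + 1)^2 dR^2]
   with [Q~ = C / alpha(t0,.)], read through the inverse of [R]; near [(t0,r0)] both coordinate
   changes are invertible since their derivatives do not vanish. *)

From Stdlib Require Import Reals Lra Lia ClassicalEpsilon.
From Coquelicot Require Import Coquelicot.
Open Scope R_scope.

Ltac eta_reduce :=
  repeat match goal with |- context [fun x : R => ?f x] => change (fun x : R => f x) with f end.

Ltac nonzero :=
  repeat split; try assumption;
  try (repeat apply Rmult_integral_contrapositive_currified; try assumption; lra).

Ltac compute_Derive :=
  match goal with
  | |- context [Derive ?F ?t0] =>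
    lazymatch F with
    | fun x => ?g x => fail
    | fun x => _ => idtac
    end;
    erewrite (is_derive_unique F t0); [| auto_derive; [nonzero | reflexivity]]
  end.

Lemma locally_in_I (lo hi : Rbar) (t : R) : in_I lo hi t -> locally t (in_I lo hi).
Proof.
intros Ht. apply (open_and _ _ (open_Rbar_gt lo) (open_Rbar_lt hi) t Ht).
Qed.

Lemma near_of_locally_2d (P : R -> R -> Prop) (x : pt) :
  locally_2d P (x 0%nat) (x 1%nat) -> near x (fun z => P (z 0%nat) (z 1%nat)).
Proof.
intros [d Hd]. exists d. split; [apply cond_pos|].
intros z Hz. apply Hd; apply Hz; lia.
Qed.

Lemma near_upd (x : pt) (P : pt -> Prop) (i : nat) :
  near x P -> locally (x i) (fun s => P (upd x i s)).
Proof.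
intros [e [He HP]]. exists (mkposreal e He). intros s Hs. apply HP.
intros j _. unfold upd. destruct (Nat.eqb j i) eqn:E.
- apply Nat.eqb_eq in E. subst j. exact Hs.
- rewrite Rminus_eq_0, Rabs_R0. exact He.
Qed.

Lemma pd_ext_near (f g : pt -> R) (i : nat) (x : pt) :
  near x (fun z => f z = g z) -> pd f i x = pd g i x.
Proof.
intros H. apply Derive_ext_loc. apply (near_upd x (fun z => f z = g z) i H).
Qed.

Lemma Rabs_between (c e u1 u2 x : R) : Rabs (u1 - c) < e -> Rabs (u2 - c) < e ->
  Rmin u1 u2 <= x <= Rmax u1 u2 -> Rabs (x - c) < e.
Proof.
intros H1 H2 H3. apply Rabs_def2 in H1. apply Rabs_def2 in H2.
unfold Rmin, Rmax in H3. destruct (Rle_dec u1 u2); apply Rabs_def1; lra.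
Qed.

Lemma is_derive_zero_ball_const (f : R -> R) (c e : R) :
  (forall s, Rabs (s - c) < e -> is_derive f s 0) -> forall s, Rabs (s - c) < e -> f s = f c.
Proof.
intros H s Hs. pose proof (Rabs_def2 _ _ Hs) as [Hs1 Hs2].
destruct (Rtotal_order s c) as [Hl|[Heq|Hg]].
- apply (eq_is_derive f s c); auto. intros u Hu. apply H. apply Rabs_def1; lra.
- subst; reflexivity.
- symmetry. apply (eq_is_derive f c s); auto. intros u Hu. apply H. apply Rabs_def1; lra.
Qed.

Lemma is_derive_neq0_ball_inj (f df : R -> R) (c e : R) :
  (forall u, Rabs (u - c) < e -> is_derive f u (df u)) ->
  (forall u, Rabs (u - c) < e -> df u <> 0) ->
  forall u1 u2, Rabs (u1 - c) < e -> Rabs (u2 - c) < e -> f u1 = f u2 -> u1 = u2.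
Proof.
intros H Hn u1 u2 H1 H2 Hf. destruct (Req_dec u1 u2) as [|Hne]; auto. exfalso.
destruct (MVT_gen f u1 u2 df) as [x [Hx Heq]].
- intros x Hx. apply H. apply (Rabs_between c e u1 u2); auto; lra.
- intros x Hx. apply continuity_pt_filterlim. apply (ex_derive_continuous f x).
  exists (df x). apply H. apply (Rabs_between c e u1 u2); auto.
- rewrite Hf, Rminus_eq_0 in Heq.
  apply (Hn x); [apply (Rabs_between c e u1 u2); auto; lra|].
  destruct (Rmult_integral _ _ (eq_sym Heq)) as [Hd|Hd]; [exact Hd | lra].
Qed.

Lemma injective_on_left_inverse (P : R -> Prop) (f : R -> R) :
  (forall u1 u2, P u1 -> P u2 -> f u1 = f u2 -> u1 = u2) ->
  exists g : R -> R, forall u, P u -> g (f u) = u.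
Proof.
intros Hinj.
exists (fun s => epsilon (inhabits 0) (fun u => P u /\ f u = s)).
intros u Hu.
destruct (epsilon_spec (inhabits 0) (fun u' => P u' /\ f u' = f u) (ex_intro _ u (conj Hu eq_refl)))
  as [H1 H2].
exact (Hinj _ _ H1 Hu H2).
Qed.

Lemma is_derive_RInt_ball (f : R -> R) (c e t : R) :
  (forall s, Rabs (s - c) < e -> continuous f s) -> Rabs (t - c) < e ->
  is_derive (fun u => RInt f c u) t (f t).
Proof.
intros Hf Ht. apply (is_derive_RInt (V := R_CompleteNormedModule) f _ c t); [|exact (Hf t Ht)].
assert (Hd : 0 < e - Rabs (t - c)) by lra. exists (mkposreal _ Hd). intros b Hb.
change (Rabs (b - t) < e - Rabs (t - c)) in Hb.
assert (Hb0 : Rabs (b - c) < e).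
{ replace (b - c) with ((b - t) + (t - c)) by ring.
  pose proof (Rabs_triang (b - t) (t - c)). lra. }
apply RInt_correct, ex_RInt_continuous. intros z Hz. apply Hf.
apply (Rabs_between c e c b); auto. rewrite Rminus_eq_0, Rabs_R0. pose proof (Rabs_pos (t - c)). lra.
Qed.

Definition metricA_inv (phi Q : R -> R) : Metric := fun a b z =>
  match a, b with
  | 0%nat, 0%nat => - / (phi (z 0%nat)) ^ 3
  | 1%nat, 1%nat => / (phi (z 0%nat) * (z 0%nat * Q (z 1%nat) + 1) ^ 2)
  | 2%nat, 2%nat => / phi (z 0%nat)
  | 3%nat, 3%nat => / phi (z 0%nat)
  | _, _ => 0 end.

(* [dmetricA phi Q c d i z] is the partial derivative of [g_cd] along [x^i]. *)
Definition dmetricA (phi Q : R -> R) (c d i : nat) (z : pt) : R :=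
  let t := z 0%nat in let q := Q (z 1%nat) in let W := t * q + 1 in
  match c, d, i with
  | 0%nat, 0%nat, 0%nat => - (3 * phi t ^ 2 * Derive phi t)
  | 1%nat, 1%nat, 0%nat => Derive phi t * W ^ 2 + phi t * (2 * W * q)
  | 1%nat, 1%nat, 1%nat => phi t * (2 * W * (t * Derive Q (z 1%nat)))
  | 2%nat, 2%nat, 0%nat => Derive phi t
  | 3%nat, 3%nat, 0%nat => Derive phi t
  | _, _, _ => 0 end.

Definition christoffelA (phi Q : R -> R) (a b c : nat) (z : pt) : R :=
  let t := z 0%nat in let q := Q (z 1%nat) in let W := t * q + 1 in
  let f := phi t in let df := Derive phi t in
  match a, b, c with
  | 0%nat, 0%nat, 0%nat => 3 * df / (2 * f)
  | 0%nat, 1%nat, 1%nat => (df * W ^ 2 + 2 * f * W * q) / (2 * f ^ 3)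
  | 0%nat, 2%nat, 2%nat => df / (2 * f ^ 3)
  | 0%nat, 3%nat, 3%nat => df / (2 * f ^ 3)
  | 1%nat, 0%nat, 1%nat => (df * W + 2 * f * q) / (2 * f * W)
  | 1%nat, 1%nat, 0%nat => (df * W + 2 * f * q) / (2 * f * W)
  | 1%nat, 1%nat, 1%nat => t * Derive Q (z 1%nat) / W
  | 2%nat, 0%nat, 2%nat => df / (2 * f)
  | 2%nat, 2%nat, 0%nat => df / (2 * f)
  | 3%nat, 0%nat, 3%nat => df / (2 * f)
  | 3%nat, 3%nat, 0%nat => df / (2 * f)
  | _, _, _ => 0 end.

Definition regular_pointA (phi Q : R -> R) (t r : R) : Prop :=
  0 < phi t /\ ex_derive phi t /\ ex_derive Q r /\ t * Q r + 1 <> 0.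

Section MetricA.

Variables phi Q : R -> R.

Lemma pd_metricA (c d i : nat) (z : pt) :
  ex_derive phi (z 0%nat) -> ex_derive Q (z 1%nat) ->
  pd (metricA phi Q c d) i z = dmetricA phi Q c d i z.
Proof.
intros H1 H2.
destruct c as [|[|[|[|c]]]]; destruct d as [|[|[|[|d]]]]; destruct i as [|[|i]];
unfold pd, metricA, dmetricA, upd; simpl;
first [ apply Derive_const | apply is_derive_unique; auto_derive; [nonzero | eta_reduce; ring] ].
Qed.

Variable z : pt.
Hypothesis Hz : regular_pointA phi Q (z 0%nat) (z 1%nat).

Lemma christoffel_metricA (a b c : nat) :
  christoffel (metricA phi Q) (metricA_inv phi Q) a b c z = christoffelA phi Q a b c z.
Proof.
destruct Hz as [Hp [Hdp [HdQ HW]]].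
unfold christoffel, sum4. rewrite !pd_metricA by assumption.
destruct a as [|[|[|[|a]]]]; destruct b as [|[|[|[|b]]]]; destruct c as [|[|[|[|c]]]];
unfold metricA_inv, dmetricA, christoffelA; simpl; field; nonzero.
Qed.

Lemma metricA_inv_inverse : is_inverse_metric_at (metricA phi Q) (metricA_inv phi Q) z.
Proof.
destruct Hz as [Hp [_ [_ HW]]]. intros a c Ha Hc.
destruct a as [|[|[|[|a]]]]; [..|lia]; destruct c as [|[|[|[|c]]]]; try lia;
unfold sum4, metricA, metricA_inv; simpl; field; nonzero.
Qed.

Lemma ulow_uA (a : nat) :
  ulow (metricA phi Q) (uA phi) a z = if Nat.eqb a 0 then - sqrt (phi (z 0%nat) ^ 3) else 0.
Proof.
destruct Hz as [Hp _].
pose proof (sqrt_sqrt (phi (z 0%nat) ^ 3) ltac:(apply pow_le; lra)) as Hss.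
pose proof (sqrt_lt_R0 (phi (z 0%nat) ^ 3) ltac:(apply pow_lt; lra)) as Hs.
set (s := sqrt _) in *.
destruct a as [|[|[|[|a]]]]; unfold ulow, sum4, metricA, uA; cbn [Nat.eqb]; try ring.
fold s. rewrite <- Hss. field. lra.
Qed.

End MetricA.

Lemma einstein_metricA (phi Q : R -> R) (z : pt) (a b : nat) :
  (a < 4)%nat -> (b < 4)%nat ->
  near z (fun w => regular_pointA phi Q (w 0%nat) (w 1%nat)) ->
  ex_derive (Derive phi) (z 0%nat) -> ex_derive (Derive Q) (z 1%nat) ->
  einstein (metricA phi Q) (metricA_inv phi Q) a b z
  = (rhoA phi Q z + pA phi z) * (if (Nat.eqb a 0 && Nat.eqb b 0)%bool then phi (z 0%nat) ^ 3 else 0)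
    + pA phi z * metricA phi Q a b z.
Proof.
intros Ha Hb Hnear Hdphi HdQ.
assert (Hchr : forall c d e i, pd (christoffel (metricA phi Q) (metricA_inv phi Q) c d e) i z
                               = pd (christoffelA phi Q c d e) i z).
{ intros c d e i. apply pd_ext_near. destruct Hnear as [eps [Heps Hreg]].
  exists eps. split; [exact Heps|]. intros w Hw. apply christoffel_metricA, Hreg, Hw. }
destruct Hnear as [eps [Heps Hreg]].
assert (Hz : regular_pointA phi Q (z 0%nat) (z 1%nat)).
{ apply Hreg. intros i _. rewrite Rminus_eq_0, Rabs_R0. exact Heps. }
destruct Hz as [Hp [Hdp [HdQ' HW]]].
destruct a as [|[|[|[|a]]]]; [..|lia]; destruct b as [|[|[|[|b]]]]; try lia;
unfold einstein, scalar_curv, sum4; simpl; rewrite ?Rmult_0_l, ?Rplus_0_l, ?Rplus_0_r;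
unfold ricci, sum4; rewrite !Hchr, !christoffel_metricA by (repeat split; assumption);
unfold pd, upd, christoffelA; simpl; repeat compute_Derive; eta_reduce;
unfold rhoA, pA; simpl; field; nonzero.
Qed.

Lemma locally_2d_regular_pointA (lo hi : Rbar) (phi Q : R -> R) (t r : R) :
  (forall s, in_I lo hi s -> 0 < phi s /\ ex_derive phi s) -> (forall q, ex_derive Q q) ->
  in_I lo hi t -> t * Q r + 1 <> 0 -> locally_2d (regular_pointA phi Q) t r.
Proof.
intros Hphi HQ Ht HW. apply locally_2d_locally.
assert (HI : locally (t, r) (fun z : R * R => in_I lo hi (fst z)))
  by exact (continuous_fst t r _ (locally_in_I lo hi t Ht)).
assert (HWc : continuous (fun z : R * R => fst z * Q (snd z) + 1) (t, r)).
{ apply (continuous_plus (V := R_NormedModule) (fun z : R * R => fst z * Q (snd z)) (fun _ => 1));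
    [|apply continuous_const].
  apply (continuous_mult (K := R_AbsRing) fst (fun z : R * R => Q (snd z))); [apply continuous_fst|].
  apply (continuous_comp snd Q); [apply continuous_snd|].
  exact (ex_derive_continuous Q r (HQ r)). }
assert (HWnear := HWc _ (open_neq 0 _ HW)).
apply (filter_imp (fun z : R * R => in_I lo hi (fst z) /\ fst z * Q (snd z) + 1 <> 0));
  [|exact (filter_and _ _ HI HWnear)].
intros [s q] [Hs Hsq]. destruct (Hphi s Hs) as [Hp Hdp]. repeat split; auto.
Qed.

Lemma perfect_fluid_metricA (phi Q : R -> R) (z : pt) :
  near z (fun w => regular_pointA phi Q (w 0%nat) (w 1%nat)) ->
  ex_derive (Derive phi) (z 0%nat) -> ex_derive (Derive Q) (z 1%nat) ->
  perfect_fluid_at (metricA phi Q) (uA phi) (rhoA phi Q) (pA phi) z.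
Proof.
intros Hnear Hdphi HdQ.
assert (Hz : regular_pointA phi Q (z 0%nat) (z 1%nat)).
{ destruct Hnear as [eps [Heps Hreg]]. apply Hreg.
  intros i _. rewrite Rminus_eq_0, Rabs_R0. exact Heps. }
pose proof (proj1 Hz) as Hp.
pose proof (sqrt_sqrt (phi (z 0%nat) ^ 3) ltac:(apply pow_le; lra)) as Hss.
pose proof (sqrt_lt_R0 (phi (z 0%nat) ^ 3) ltac:(apply pow_lt; lra)) as Hs.
exists (metricA_inv phi Q). split; [|split].
- destruct Hnear as [eps [Heps Hreg]]. exists eps. split; [exact Heps|].
  intros w Hw. apply metricA_inv_inverse, Hreg, Hw.
- unfold sum4. rewrite !ulow_uA by exact Hz. unfold uA. cbn [Nat.eqb].
  field. lra.
- intros a b Ha Hb. rewrite einstein_metricA by assumption.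
  rewrite !ulow_uA by exact Hz.
  set (s := sqrt _) in *.
  destruct a as [|a]; destruct b as [|b]; cbn [Nat.eqb andb]; rewrite <- ?Hss; ring.
Qed.
Definition clock_rate (v phi : R -> R) (s : R) : R := / (sqrt (v s) * (phi s * sqrt (phi s))).

Definition new_time (v phi : R -> R) (t0 t : R) : R := RInt (clock_rate v phi) t0 t.

Lemma is_derive_integrating_factor (v phi df : R -> R) (ddf s : R) :
  0 < v s -> 0 < phi s -> ex_derive v s -> ex_derive phi s -> is_derive df s ddf ->
  is_derive (fun u => df u * (sqrt (v u) * (phi u * sqrt (phi u)))) s
    ((2 * v s * phi s * ddf + (Derive v s * phi s + 3 * v s * Derive phi s) * df s)
     * (sqrt (phi s) / (2 * sqrt (v s)))).
Proof.
intros Hv Hp Hdv Hdp Hdf.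
pose proof (sqrt_lt_R0 _ Hv) as Hsv0. pose proof (sqrt_lt_R0 _ Hp) as Hsp0.
pose proof (sqrt_sqrt _ (Rlt_le _ _ Hv)) as Hsv. pose proof (sqrt_sqrt _ (Rlt_le _ _ Hp)) as Hsp.
rewrite <- (is_derive_unique _ _ _ Hdf).
auto_derive; [nonzero; exists ddf; exact Hdf |].
eta_reduce. set (sv := sqrt (v s)) in *. set (sp := sqrt (phi s)) in *.
rewrite <- Hsv, <- Hsp. field. lra.
Qed.

Section TimeEquation.

Variables (v phi : R -> R) (t0 e : R).
Hypothesis Hvphi : forall s, Rabs (s - t0) < e ->
  0 < v s /\ 0 < phi s /\ ex_derive v s /\ ex_derive phi s.

Lemma clock_rate_pos (s : R) : Rabs (s - t0) < e -> 0 < clock_rate v phi s.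
Proof.
intros Hs. destruct (Hvphi s Hs) as [Hv [Hp _]].
pose proof (sqrt_lt_R0 _ Hv). pose proof (sqrt_lt_R0 _ Hp).
apply Rinv_0_lt_compat, Rmult_lt_0_compat; [|apply Rmult_lt_0_compat]; assumption.
Qed.

Lemma is_derive_new_time (t : R) :
  Rabs (t - t0) < e -> is_derive (new_time v phi t0) t (clock_rate v phi t).
Proof.
apply is_derive_RInt_ball. intros s Hs. destruct (Hvphi s Hs) as [Hv [Hp [Hdv Hdp]]].
pose proof (sqrt_lt_R0 _ Hv). pose proof (sqrt_lt_R0 _ Hp).
apply (ex_derive_continuous (clock_rate v phi)). unfold clock_rate. auto_derive. nonzero.
Qed.

Variable f : R -> R.
Hypothesis Hf : forall s, Rabs (s - t0) < e -> ex_derive f s /\ ex_derive (Derive f) s.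
Hypothesis Hode : forall s, Rabs (s - t0) < e ->
  2 * v s * phi s * Derive (Derive f) s + (Derive v s * phi s + 3 * v s * Derive phi s) * Derive f s = 0.

Lemma time_equation_first_integral (s : R) : Rabs (s - t0) < e ->
  Derive f s = Derive f t0 / clock_rate v phi t0 * clock_rate v phi s.
Proof.
set (G := fun u => Derive f u * (sqrt (v u) * (phi u * sqrt (phi u)))).
assert (HG : forall u, Rabs (u - t0) < e -> is_derive G u 0).
{ intros u Hu. destruct (Hvphi u Hu) as [Hv [Hp [Hdv Hdp]]].
  rewrite <- (Rmult_0_l (sqrt (phi u) / (2 * sqrt (v u)))), <- (Hode u Hu).
  apply is_derive_integrating_factor; try assumption.
  apply Derive_correct, Hf, Hu. }
assert (HGw : forall u, Rabs (u - t0) < e -> Derive f u = G u * clock_rate v phi u).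
{ intros u Hu. destruct (Hvphi u Hu) as [Hv [Hp _]].
  pose proof (sqrt_lt_R0 _ Hv). pose proof (sqrt_lt_R0 _ Hp).
  unfold G, clock_rate. field. nonzero. }
intros Hs. assert (Ht0 : Rabs (t0 - t0) < e) by (rewrite Rminus_eq_0, Rabs_R0; pose proof (Rabs_pos (s - t0)); lra).
rewrite (HGw s Hs), (HGw t0 Ht0), (is_derive_zero_ball_const G t0 e HG s Hs).
field. apply Rgt_not_eq, clock_rate_pos, Ht0.
Qed.

Lemma time_equation_solution (t : R) : Rabs (t - t0) < e ->
  f t = f t0 + Derive f t0 / clock_rate v phi t0 * new_time v phi t0 t.
Proof.
set (c := Derive f t0 / clock_rate v phi t0).
assert (HF : forall s, Rabs (s - t0) < e -> is_derive (fun u => f u - c * new_time v phi t0 u) s 0).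
{ intros s Hs. replace 0 with (Derive f s - c * clock_rate v phi s)
    by (rewrite (time_equation_first_integral s Hs); unfold c; ring).
  apply (is_derive_minus f); [apply Derive_correct, Hf, Hs|].
  apply is_derive_scal, is_derive_new_time, Hs. }
intros Ht. pose proof (is_derive_zero_ball_const _ t0 e HF t Ht) as Hc.
unfold new_time in Hc at 2. rewrite RInt_point in Hc. change (zero : R) with 0 in Hc. lra.
Qed.

End TimeEquation.

Lemma pullback_metricA_product (phit Qt T Rr : R -> R) (lam t r x y : R) (a b : nat) :
  (a < 4)%nat -> (b < 4)%nat ->
  pullback (metricA phit Qt)
    (fun z => mkpt (T (z 0%nat)) (Rr (z 1%nat)) (lam * z 2%nat) (lam * z 3%nat)) a b (mkpt t r x y)
  = match a, b with
    | 0%nat, 0%nat => - phit (T t) ^ 3 * Derive T t ^ 2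
    | 1%nat, 1%nat => phit (T t) * (T t * Qt (Rr r) + 1) ^ 2 * Derive Rr r ^ 2
    | 2%nat, 2%nat | 3%nat, 3%nat => lam ^ 2 * phit (T t)
    | _, _ => 0
    end.
Proof.
assert (Dlam : forall s, Derive (Rmult lam) s = lam).
{ intro s. apply is_derive_unique. change (Rmult lam) with (fun u => lam * u). auto_derive; [auto | ring]. }
intros Ha Hb.
destruct a as [|[|[|[|a]]]]; [..|lia]; destruct b as [|[|[|[|b]]]]; try lia;
unfold pullback, sum4, pd, upd, metricA; simpl; eta_reduce; rewrite ?Dlam, ?Derive_const; ring.
Qed.

Lemma metricB_eq_pullback_metricA (v phi phit Qt T Rr A C : R -> R) (alpha : R -> R -> R)
    (t r x y : R) (a b : nat) :
  (a < 4)%nat -> (b < 4)%nat -> 0 < v t -> 0 < phi t ->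
  Derive T t = clock_rate v phi t -> Derive Rr r = A r -> A r <> 0 ->
  phit (T t) = phi t -> Qt (Rr r) = C r / A r -> alpha t r = A r + C r * T t ->
  metricB v phi alpha a b (mkpt t r x y)
  = pullback (metricA phit Qt)
      (fun z => mkpt (T (z 0%nat)) (Rr (z 1%nat)) (1 * z 2%nat) (1 * z 3%nat)) a b (mkpt t r x y).
Proof.
intros Ha Hb Hv Hp DT DR HA PT QR Hal.
rewrite pullback_metricA_product, DT, DR, PT, QR by assumption.
pose proof (sqrt_lt_R0 _ Hv). pose proof (sqrt_lt_R0 _ Hp).
pose proof (sqrt_sqrt _ (Rlt_le _ _ Hv)) as Hsv. pose proof (sqrt_sqrt _ (Rlt_le _ _ Hp)) as Hsp.
unfold clock_rate. set (sv := sqrt (v t)) in *. set (sp := sqrt (phi t)) in *.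
destruct a as [|[|[|[|a]]]]; [..|lia]; destruct b as [|[|[|[|b]]]]; try lia;
unfold metricB; simpl; rewrite ?Hal, <- ?Hsv, <- ?Hsp; field; nonzero.
Qed.
Lemma metricB_locally_pullback_metricA (lo hi : Rbar) (v phi : R -> R) (alpha : R -> R -> R) (t0 r0 : R) :
  (forall t, in_I lo hi t -> 0 < v t /\ 0 < phi t /\ ex_derive v t /\ ex_derive phi t) ->
  (forall t r, in_I lo hi t ->
     ex_derive (fun s => alpha s r) t /\ ex_derive (Derive (fun s => alpha s r)) t) ->
  (forall t r, in_I lo hi t ->
     2 * v t * phi t * Derive (Derive (fun s => alpha s r)) t
     + (Derive v t * phi t + 3 * v t * Derive phi t) * Derive (fun s => alpha s r) t = 0) ->
  (forall r, continuous (alpha t0) r) ->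
  in_I lo hi t0 -> alpha t0 r0 <> 0 ->
  exists eps (T Rr phit Qt : R -> R) (k lam : R),
    0 < eps /\ 0 < k /\ 0 < lam /\
    (forall t, Rabs (t - t0) < eps ->
       in_I lo hi t /\ ex_derive T t /\ Derive T t <> 0 /\
       0 < phit (T t) /\ phit (T t) = k * phi t) /\
    (forall r, Rabs (r - r0) < eps -> ex_derive Rr r /\ Derive Rr r <> 0) /\
    (forall t r x y, Rabs (t - t0) < eps -> Rabs (r - r0) < eps ->
       forall a b, (a < 4)%nat -> (b < 4)%nat ->
         metricB v phi alpha a b (mkpt t r x y)
         = pullback (metricA phit Qt)
             (fun z => mkpt (T (z 0%nat)) (Rr (z 1%nat)) (lam * z 2%nat) (lam * z 3%nat))
             a b (mkpt t r x y)).
Proof.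
intros Hvphi Halpha Hode HA Ht0 HA0.
destruct (locally_in_I lo hi t0 Ht0) as [e1 He1].
destruct (HA r0 _ (open_neq 0 _ HA0)) as [e2 He2].
assert (He : 0 < Rmin e1 e2) by (apply Rmin_pos; apply cond_pos).
pose proof (Rmin_l e1 e2) as He_1. pose proof (Rmin_r e1 e2) as He_2.
set (e := Rmin e1 e2) in *.
assert (HtI : forall t, Rabs (t - t0) < e -> in_I lo hi t)
  by (intros t Ht; apply He1; change (Rabs (t - t0) < e1); lra).
assert (HAnz : forall r, Rabs (r - r0) < e -> alpha t0 r <> 0)
  by (intros r Hr; apply He2; change (Rabs (r - r0) < e2); lra).
clearbody e.
set (T := new_time v phi t0).
set (Rr := fun r => RInt (alpha t0) r0 r).
set (C := fun r => Derive (fun s => alpha s r) t0 / clock_rate v phi t0).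
assert (Hvphi_e : forall s, Rabs (s - t0) < e -> 0 < v s /\ 0 < phi s /\ ex_derive v s /\ ex_derive phi s)
  by (intros s Hs; apply Hvphi, HtI, Hs).
assert (HTd : forall t, Rabs (t - t0) < e -> is_derive T t (clock_rate v phi t))
  by exact (is_derive_new_time v phi t0 e Hvphi_e).
assert (HRd : forall r, is_derive Rr r (alpha t0 r)).
{ intro r. apply (is_derive_RInt_ball _ r0 (Rabs (r - r0) + 1)); [intros; apply HA | lra]. }
assert (Hal : forall t r, Rabs (t - t0) < e -> alpha t r = alpha t0 r + C r * T t).
{ intros t r Ht. apply (time_equation_solution v phi t0 e Hvphi_e (fun s => alpha s r)); [| | exact Ht].
  - intros s Hs. apply Halpha, HtI, Hs.
  - intros s Hs. apply Hode, HtI, Hs. }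
destruct (injective_on_left_inverse (fun u => Rabs (u - t0) < e) T
  (is_derive_neq0_ball_inj T _ t0 e HTd (fun u Hu => Rgt_not_eq _ _ (clock_rate_pos v phi t0 e Hvphi_e u Hu))))
  as [Tinv HTinv].
destruct (injective_on_left_inverse (fun u => Rabs (u - r0) < e) Rr
  (is_derive_neq0_ball_inj Rr _ r0 e (fun u _ => HRd u) HAnz)) as [Rinv HRinv].
exists e, T, Rr, (fun s => phi (Tinv s)), (fun s => C (Rinv s) / alpha t0 (Rinv s)), 1, 1.
split; [exact He|]. split; [lra|]. split; [lra|]. split; [|split].
- intros t Ht. rewrite HTinv, (is_derive_unique _ _ _ (HTd t Ht)) by exact Ht.
  split; [apply HtI, Ht|]. split; [exists (clock_rate v phi t); apply HTd, Ht|].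
  split; [apply Rgt_not_eq, (clock_rate_pos v phi t0 e Hvphi_e), Ht|].
  split; [apply (Hvphi_e t Ht) | ring].
- intros r Hr. rewrite (is_derive_unique _ _ _ (HRd r)).
  split; [exists (alpha t0 r); apply HRd | apply HAnz, Hr].
- intros t r x y Ht Hr a b Ha Hb.
  destruct (Hvphi_e t Ht) as [Hv [Hp _]].
  apply (metricB_eq_pullback_metricA v phi _ _ T Rr (alpha t0) C); auto.
  + apply is_derive_unique, HTd, Ht.
  + apply is_derive_unique, HRd.
  + rewrite HTinv by exact Ht. reflexivity.
  + rewrite HRinv by exact Hr. reflexivity.
Qed.

Lemma affine_in_Q_regular (lo hi : Rbar) (al1 al2 : R -> R) (q t : R) :
  (forall s, in_I lo hi s ->
     ex_derive al1 s /\ ex_derive (Derive al1) s /\ ex_derive al2 s /\ ex_derive (Derive al2) s) ->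
  in_I lo hi t ->
  ex_derive (fun s => al1 s + al2 s * q) t /\ ex_derive (Derive (fun s => al1 s + al2 s * q)) t.
Proof.
intros Hal Ht. destruct (Hal t Ht) as [H1 [H1' [H2 H2']]].
split; [auto_derive; auto|].
apply (ex_derive_ext_loc (fun s => Derive al1 s + Derive al2 s * q)); [|auto_derive; auto].
apply (filter_imp (in_I lo hi)); [|exact (locally_in_I lo hi t Ht)].
intros s Hs. destruct (Hal s Hs) as [Hs1 [_ [Hs2 _]]].
symmetry. apply is_derive_unique. auto_derive; [auto | eta_reduce; ring].
Qed.

Theorem mainTheorem7 :
  (* (a) *)
  (forall (lo hi : Rbar) (phi Q : R -> R),
     (forall t, in_I lo hi t ->
        0 < phi t /\ ex_derive phi t /\ ex_derive (Derive phi) t) ->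
     (forall r, ex_derive Q r /\ ex_derive (Derive Q) r) ->
     forall t r x y, in_I lo hi t -> t * Q r + 1 <> 0 ->
       perfect_fluid_at (metricA phi Q) (uA phi) (rhoA phi Q) (pA phi)
         (mkpt t r x y))
  /\
  (* (b) *)
  (forall (lo hi : Rbar) (phi v al1 al2 Q : R -> R),
     (forall t, in_I lo hi t ->
        0 < phi t /\ 0 < v t /\ ex_derive phi t /\ ex_derive v t /\
        ex_derive al1 t /\ ex_derive (Derive al1) t /\
        ex_derive al2 t /\ ex_derive (Derive al2) t) ->
     (forall r, continuous Q r) ->
     (exists t1 t2, in_I lo hi t1 /\ in_I lo hi t2 /\ al2 t1 <> al2 t2) ->
     let alpha := fun t r => al1 t + al2 t * Q r in
     (forall t r, in_I lo hi t ->
        2 * v t * phi t * Derive (Derive (fun s => alpha s r)) t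
        + (Derive v t * phi t + 3 * v t * Derive phi t)
          * Derive (fun s => alpha s r) t = 0) ->
     forall t0 r0, in_I lo hi t0 -> alpha t0 r0 <> 0 ->
     exists eps (T Rr phit Qt : R -> R) (k lam : R),
       0 < eps /\ 0 < k /\ 0 < lam /\
       (forall t, Rabs (t - t0) < eps ->
          in_I lo hi t /\ ex_derive T t /\ Derive T t <> 0 /\
          0 < phit (T t) /\ phit (T t) = k * phi t) /\
       (forall r, Rabs (r - r0) < eps -> ex_derive Rr r /\ Derive Rr r <> 0) /\
       (forall t r x y, Rabs (t - t0) < eps -> Rabs (r - r0) < eps ->
          forall a b, (a < 4)%nat -> (b < 4)%nat ->
            metricB v phi alpha a b (mkpt t r x y)
            = pullback (metricA phit Qt)
                (fun z => mkpt (T (z 0%nat)) (Rr (z 1%nat)) (lam * z 2%nat) (lam * z 3%nat))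
                a b (mkpt t r x y))).
Proof.
split.
- intros lo hi phi Q Hphi HQ t r x y Ht HW.
  apply perfect_fluid_metricA; [| apply (Hphi t Ht) | apply (HQ r)].
  apply (near_of_locally_2d (regular_pointA phi Q) (mkpt t r x y)).
  apply (locally_2d_regular_pointA lo hi); auto.
  + intros s Hs. destruct (Hphi s Hs) as [Hp [Hdp _]]. auto.
  + intro q. apply HQ.
-
  intros lo hi phi v al1 al2 Q Hreg HQ _ alpha Hode t0 r0 Ht0 Hal0.
  apply (metricB_locally_pullback_metricA lo hi v phi alpha t0 r0); auto.
  + intros t Ht. destruct (Hreg t Ht) as [Hp [Hv [Hdp [Hdv _]]]]. auto.
  + intros t r Ht. apply (affine_in_Q_regular lo hi); auto.
    intros s Hs. destruct (Hreg s Hs) as [_ [_ [_ [_ Hal]]]]. exact Hal.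
  + intro r. apply (continuous_plus (V := R_NormedModule) (fun _ => al1 t0)); [apply continuous_const|].
    apply (continuous_mult (K := R_AbsRing) (fun _ => al2 t0) Q); [apply continuous_const | apply HQ].
Qed.
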